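(* For every $n\in\mathbb{N}$, $F(\mathbb{A}^{(n)})\cong\mathbb{A}^n$, and $F(\mathbb{A}^{( * )})\cong\mathbb{A}^*$, as nominal $\mathrm{Sb}$-sets.
   Context: $\mathbb{A}$ is a countably infinite set of atoms; $\mathrm{Sb}$ is the monoid of functions $\mathbb{A}\to\mathbb{A}$ that are the identity outside a finite set, $\mathrm{Perm}$ its bijections. $\mathbb{A}$ is a nominal $\mathrm{Sb}$-set (and $\mathrm{Perm}$-set) via $m\cdot a=m(a)$. $\mathbb{A}^{(n)}$ is the nominal $\mathrm{Perm}$-set of words of length $n$ with pairwise distinct letters, $\mathbb{A}^{( * )}=\coprod_n\mathbb{A}^{(n)}$; $\mathbb{A}^n$ and $\mathbb{A}^*=\coprod_n\mathbb{A}^n$ carry the pointwise $\mathrm{Sb}$-action. For a nominal $\mathrm{Perm}$-set $X$ (every element $x$ has a finite set $C$ with $g|_C=g'|_C\Rightarrow gx=g'x$), $F(X)=(\mathrm{Sb}\times X)/{\sim}$, where $\sim$ is the least equivalence containing $(m,gx)\sim(mg,x)$ for $g\in\mathrm{Perm}$ and $(m,x)\sim(m',x)$ whenever $m|_C=m'|_C$ for such a support $C$ of $x$; the $\mathrm{Sb}$-action is $n\cdot[m,x]=[nm,x]$. *)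

From mathcomp Require Import all_boot.
From Stdlib Require Import Relations.
Set Implicit Arguments. Unset Strict Implicit. Unset Printing Implicit Defensive.

Definition atom := nat.

Definition fin_id (m : atom -> atom) : Prop :=
  exists s : seq atom, forall a, a \notin s -> m a = a.

Definition Sb := {m : atom -> atom | fin_id m}.

Lemma fin_id_comp (m m' : atom -> atom) : fin_id m -> fin_id m' -> fin_id (m \o m').
Proof.
move=> [s Hs] [s' Hs']; exists (s ++ s') => a; rewrite mem_cat negb_or => /andP[a1 a2].
by rewrite /= Hs' // Hs.
Qed.

Definition sb_comp (m m' : Sb) : Sb :=
  exist _ (proj1_sig m \o proj1_sig m') (fin_id_comp (proj2_sig m) (proj2_sig m')).

Definition Perm := {g : Sb | bijective (proj1_sig g)}.
Definition pfun (g : Perm) : atom -> atom := proj1_sig (proj1_sig g).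

Definition is_support (X : Type) (pact : Perm -> X -> X) (C : seq atom) (x : X) :=
  forall g g' : Perm, {in C, pfun g =1 pfun g'} -> pact g x = pact g' x.

Inductive Fgen (X : Type) (pact : Perm -> X -> X) : Sb * X -> Sb * X -> Prop :=
| Fgen_perm (m : Sb) (g : Perm) (x : X) :
    Fgen pact (m, pact g x) (sb_comp m (proj1_sig g), x)
| Fgen_supp (m m' : Sb) (x : X) (C : seq atom) :
    is_support pact C x -> {in C, proj1_sig m =1 proj1_sig m'} ->
    Fgen pact (m, x) (m', x).

Definition Fsim (X : Type) (pact : Perm -> X -> X) : relation (Sb * X) :=
  clos_refl_sym_trans _ (Fgen pact).

(* F(X) = (Sb * X)/~ with action n.[m,x] = [n m, x] is isomorphic, as an
   Sb-set, to (Y, sact): there is a map f : Sb * X -> Y whose kernel is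
   exactly ~ (so it induces a well-defined injection F(X) -> Y), which is
   surjective and Sb-equivariant. *)
Definition F_iso (X : Type) (pact : Perm -> X -> X) (Y : Type) (sact : Sb -> Y -> Y) : Prop :=
  exists f : Sb * X -> Y,
    [/\ (forall p q, f p = f q <-> Fsim pact p q),
        (forall y, exists p, f p = y) &
        (forall (k m : Sb) (x : X), f (sb_comp k m, x) = sact k (f (m, x)))].

Definition An (n : nat) := n.-tuple atom.
Definition sb_act_An (n : nat) (m : Sb) (t : An n) : An n := map_tuple (proj1_sig m) t.

Definition sb_act_Astar (m : Sb) (s : seq atom) : seq atom := map (proj1_sig m) s.

Definition Adn (n : nat) := {t : n.-tuple atom | uniq t}.

Lemma perm_uniq (g : Perm) (s : seq atom) : uniq s -> uniq (map (pfun g) s).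
Proof.
move=> u; rewrite map_inj_uniq //; apply: bij_inj; exact: (proj2_sig g).
Qed.

Definition perm_act_Adn (n : nat) (g : Perm) (t : Adn n) : Adn n :=
  exist _ (map_tuple (pfun g) (proj1_sig t))
    (perm_uniq g (proj2_sig t)).

(* A^(star) = coproduct of the A^(n): duplicate-free words of any length *)
Definition Adstar := {s : seq atom | uniq s}.

Definition perm_act_Adstar (g : Perm) (s : Adstar) : Adstar :=
  exist _ (map (pfun g) (proj1_sig s)) (perm_uniq g (proj2_sig s)).

From mathcomp Require Import all_boot.
From Stdlib Require Import Relations.
Set Implicit Arguments. Unset Strict Implicit. Unset Printing Implicit Defensive.

(* Both A^(n) and A^(star) embed Perm-equivariantly into duplicate-free words,
   and [m, x] |-> m(x) (letterwise) is the candidate isomorphism.  It is onto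
   because any word is the image of the distinct word 0 1 ... (n-1) under a
   finitely supported substitution.  Its kernel is ~: two pairs with the same
   image have words of equal length, which a permutation identifies, after
   which the substitutions agree on the letters of the word, a support.
   Conversely every support of a distinct word contains its letters (swap a
   letter outside the support with a fresh atom), so both generating steps of
   ~ preserve the image. *)

Definition swap_atoms (a b c : atom) : atom :=
  if c == a then b else if c == b then a else c.

Lemma swap_atoms_l a b : swap_atoms a b a = b.
Proof. by rewrite /swap_atoms eqxx. Qed.

Lemma swap_atoms_id a b c : c != a -> c != b -> swap_atoms a b c = c.
Proof. by rewrite /swap_atoms => /negbTE -> /negbTE ->. Qed.

Lemma swap_atomsK a b : involutive (swap_atoms a b).
Proof.
move=> c; rewrite /swap_atoms.
case: (eqVneq c a) => [->|ca]; first by rewrite eqxx; case: eqVneq.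
case: (eqVneq c b) => [->|cb]; first by rewrite eqxx.
by rewrite (negbTE ca) (negbTE cb).
Qed.

Lemma fin_id_swap_atoms a b : fin_id (swap_atoms a b).
Proof.
by exists [:: a; b] => c; rewrite !inE negb_or => /andP[ca cb]; apply: swap_atoms_id.
Qed.

Definition swap_perm (a b : atom) : Perm :=
  exist _ (exist _ (swap_atoms a b) (fin_id_swap_atoms a b)) (inv_bij (swap_atomsK a b)).

Lemma fin_id_id : fin_id id.
Proof. by exists [::]. Qed.

Definition id_perm : Perm := exist _ (exist _ id fin_id_id) (inv_bij (fun a : atom => erefl a)).

Definition perm_comp (g h : Perm) : Perm :=
  exist _ (sb_comp (proj1_sig g) (proj1_sig h)) (bij_comp (proj2_sig g) (proj2_sig h)).

Lemma pfun_inj (g : Perm) : injective (pfun g).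
Proof. exact: bij_inj (proj2_sig g). Qed.

Lemma exists_perm_map (s t : seq atom) : uniq s -> uniq t -> size s = size t ->
  exists g : Perm, map (pfun g) s = t.
Proof.
elim: s t => [|a s IHs] [|b t] //=; first by exists id_perm.
move=> /andP[as_ us] /andP[bt ut] [size_st].
have [h hs] := IHs t us ut size_st.
exists (perm_comp (swap_perm (pfun h a) b) h).
rewrite /pfun /= swap_atoms_l; congr cons.
rewrite -[RHS]hs; apply/eq_in_map => c cs /=; apply: swap_atoms_id.
- by rewrite (inj_eq (@pfun_inj h)); apply: contraNneq as_ => <-.
- by apply: contraNneq bt => <-; rewrite -hs map_f.
Qed.

Definition fresh_atom (s : seq atom) : atom := (\max_(c <- s) c).+1.

Lemma fresh_atom_gt (s : seq atom) c : c \in s -> c < fresh_atom s.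
Proof. by move=> cs; rewrite ltnS; apply: (leq_bigmax_seq (F := id)). Qed.

Lemma fresh_atom_notin (s : seq atom) : fresh_atom s \notin s.
Proof. by apply/negP => /fresh_atom_gt; rewrite ltnn. Qed.

Lemma word_sub_support (C s : seq atom) :
  is_support (fun g => map (pfun g)) C s -> {subset s <= C}.
Proof.
move=> suppC a sa; apply: contraT => aC.
pose b := fresh_atom (C ++ s).
have : map (pfun (swap_perm a b)) s = map (pfun id_perm) s.
  apply: suppC => c cC; apply: swap_atoms_id; first by apply: contraNneq aC => <-.
  by rewrite neq_ltn fresh_atom_gt // mem_cat cC.
rewrite map_id => swap_s.
have bs : b \in s by rewrite -swap_s; apply/mapP; exists a; rewrite // /pfun /= swap_atoms_l.
by have := fresh_atom_notin (C ++ s); rewrite mem_cat bs orbT.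
Qed.

Section WordEmbedding.

Variables (X : Type) (pact : Perm -> X -> X) (v : X -> seq atom).
Hypotheses (v_equivariant : forall g x, v (pact g x) = map (pfun g) (v x))
  (v_inj : injective v) (v_uniq : forall x, uniq (v x)).

Lemma is_support_word x : is_support pact (v x) x.
Proof. by move=> g g' gg'; apply: v_inj; rewrite !v_equivariant; apply/eq_in_map. Qed.

Lemma embedded_word_sub_support C x : is_support pact C x -> {subset v x <= C}.
Proof.
move=> suppC; apply: word_sub_support => g g' gg'.
by rewrite -!v_equivariant (suppC g g').
Qed.

Definition F_word (p : Sb * X) : seq atom := map (proj1_sig p.1) (v p.2).

Lemma F_word_comp (k m : Sb) x :
  F_word (sb_comp k m, x) = map (proj1_sig k) (F_word (m, x)).
Proof. exact: map_comp. Qed.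

Lemma F_word_Fgen p q : Fgen pact p q -> F_word p = F_word q.
Proof.
case=> [m g x | m m' x C suppC mm'] /=; first by rewrite /F_word v_equivariant -map_comp.
by apply/eq_in_map => a /(embedded_word_sub_support suppC); apply: mm'.
Qed.

Lemma F_word_Fsim p q : Fsim pact p q -> F_word p = F_word q.
Proof.
elim=> [{}p {}q /F_word_Fgen //| // | {}p {}q _ -> // | {}p {}q r _ -> _ -> //].
Qed.

Lemma Fsim_F_word p q : F_word p = F_word q -> Fsim pact p q.
Proof.
case: p q => m x [m' x']; rewrite /F_word /= => mx_m'x'.
have size_x : size (v x') = size (v x).
  by rewrite -(size_map (proj1_sig m')) -mx_m'x' size_map.
have [g gx'] := exists_perm_map (v_uniq x') (v_uniq x) size_x.
have <- : pact g x' = x by apply: v_inj; rewrite v_equivariant.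
apply: (rst_trans _ _ _ (sb_comp m (proj1_sig g), x')); apply: rst_step.
  exact: Fgen_perm.
apply: Fgen_supp (@is_support_word x') _; apply/eq_in_map.
by rewrite -mx_m'x' -gx' -map_comp.
Qed.

Lemma F_word_eq_Fsim p q : F_word p = F_word q <-> Fsim pact p q.
Proof. by split; [apply: Fsim_F_word | apply: F_word_Fsim]. Qed.

End WordEmbedding.

Lemma fin_id_of_word n (t : seq atom) :
  fin_id (fun a => if a < n then nth 0 t a else a).
Proof. by exists (iota 0 n) => a; rewrite mem_iota /= add0n => /negbTE ->. Qed.

Lemma sb_map_iota n (t : seq atom) : size t = n ->
  exists m : Sb, map (proj1_sig m) (iota 0 n) = t.
Proof.
move=> size_t; exists (exist _ _ (fin_id_of_word n t)) => /=.
rewrite -[RHS](mkseq_nth 0) size_t; apply/eq_in_map => a.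
by rewrite mem_iota /= add0n => ->.
Qed.

Theorem mainTheorem8 :
  (forall n : nat, F_iso (@perm_act_Adn n) (@sb_act_An n)) /\
  F_iso perm_act_Adstar sb_act_Astar.
Proof.
split.
- move=> n; pose v (x : Adn n) : seq atom := val (proj1_sig x).
  have v_inj : injective v by move=> x y /val_inj/val_inj.
  have F_eq_Fsim := @F_word_eq_Fsim _ (@perm_act_Adn n) v (fun _ _ => erefl) v_inj
    (fun x => proj2_sig x).
  exists (fun p => map_tuple (proj1_sig p.1) (proj1_sig p.2)); split.
  + move=> p q; apply: iff_trans (F_eq_Fsim p q).
    by split=> [/(congr1 val)|eq_words]; last apply: val_inj.
  + move=> y; have [m my] := sb_map_iota (size_tuple y).
    by exists (m, exist _ (iota_tuple n 0) (iota_uniq 0 n)); apply: val_inj.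
  + by move=> k m x; apply: val_inj; apply: map_comp.
- exists (F_word (fun x : Adstar => proj1_sig x)); split.
  + exact: @F_word_eq_Fsim _ perm_act_Adstar _ (fun _ _ => erefl) val_inj (fun x => proj2_sig x).
  + move=> y; have [m my] := sb_map_iota (erefl (size y)).
    by exists (m, exist _ (iota 0 (size y)) (iota_uniq 0 (size y))).
  + exact: F_word_comp.
Qed.
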